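(* Let $d\ge1$ be a fixed integer and let $G$ be a uniformly random simple $d$-regular graph on $n$ labelled vertices. For a set $E$ of vertex pairs let $\mathcal{X}_E=\mathbf 1\{E\subset E(G)\}$ and $\mathcal{X}_{E^c}=\mathbf 1\{E\cap E(G)=\emptyset\}$ (write $\mathcal{X}_e$ when $E=\{e\}$). Let $E_1,E_2$ be disjoint sets of vertex pairs with $|E_i|=O(\log n)$, $i=1,2$, such that $\mathbb{P}(\mathcal{X}_{E_1}\mathcal{X}_{E_2^c}=1)>0$, and let $e$ be another pair not in $E_1\cup E_2$. Then $$\mathbb{P}(\mathcal{X}_e=1\mid\mathcal{X}_{E_1}\mathcal{X}_{E_2^c}=1)\le\frac dn+O\Big(\frac{|E_1|+|E_2|}{n^2}\Big).$$ Furthermore, if $e$ shares no vertex with any pair in $E_1\cup E_2$, then $$\mathbb{P}(\mathcal{X}_e=1\mid\mathcal{X}_{E_1}\mathcal{X}_{E_2^c}=1)=\frac dn+O\Big(\frac{|E_1|+|E_2|}{n^2}\Big).$$ The same statements hold for a uniformly random simple $d$-regular bipartite graph with $n$ vertices in each part (with all pairs taken between the two parts).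
   Context: The $O(\cdot)$ constants are uniform over all admissible $E_1,E_2,e$ with $|E_1|,|E_2|\le C\log n$ for a fixed constant $C$, and depend only on $d$ and $C$; the statements are for $n$ sufficiently large. *)

From HB Require Import structures.
From mathcomp Require Import all_boot all_order all_algebra.
From mathcomp Require Import all_classical all_reals all_analysis.
Set Implicit Arguments. Unset Strict Implicit. Unset Printing Implicit Defensive.
Import Order.TTheory GRing.Theory Num.Theory.
Local Open Scope ring_scope.

(* A graph on a finite vertex type V is its edge set: a set of vertex pairs,
   each pair being a 2-element subset of V. *)

Definition simple_pair {V : finType} (p : {set V}) : bool := #|p| == 2%N.

Definition bip_pair {n : nat} (p : {set ('I_n + 'I_n)%type}) : bool :=
  [exists a : 'I_n, exists b : 'I_n, p == [set inl a; inr b]].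

Definition deg {V : finType} (G : {set {set V}}) (v : V) : nat :=
  #|[set p in G | v \in p]|.

(* the (finite) sample space: all d-regular graphs whose edges are admissible
   pairs; the random graph is uniform on this set *)
Definition reg_graphs {V : finType} (ok : pred {set V}) (d : nat)
  : {set {set {set V}}} :=
  [set G : {set {set V}} | [forall p in G, ok p] && [forall v, deg G v == d]].

Definition cond_prob (R : numFieldType) {T : finType} (Om A B : {set T}) : R :=
  (#|Om :&: A :&: B|)%:R / (#|Om :&: B|)%:R.

Definition ev_in_out {V : finType} (E1 E2 : {set {set V}}) : {set {set {set V}}} :=
  [set G : {set {set V}} | (E1 \subset G) && [disjoint E2 & G]].

Definition ev_edge {V : finType} (e : {set V}) : {set {set {set V}}} :=
  [set G : {set {set V}} | e \in G].

(* The content of the lemma, for one model (vertex type V, admissible pairs ok,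
   n = number of vertices (per part in the bipartite case)), with O-constant K
   and size constant C. *)
Definition edge_cond_bounds (R : realType) {V : finType} (ok : pred {set V})
  (d n : nat) (C K : R) : Prop :=
  forall (E1 E2 : {set {set V}}) (e : {set V}),
    (forall p, p \in E1 -> ok p) ->
    (forall p, p \in E2 -> ok p) ->
    ok e ->
    [disjoint E1 & E2] ->
    (#|E1|%:R <= C * ln (n%:R : R)) ->
    (#|E2|%:R <= C * ln (n%:R : R)) ->
    (0 < #|reg_graphs ok d :&: ev_in_out E1 E2|)%N ->
    e \notin E1 :|: E2 ->
    let P := cond_prob R (reg_graphs ok d) (ev_edge e) (ev_in_out E1 E2) in
    let err := K * ((#|E1| + #|E2| + 1)%:R / (n%:R ^+ 2)) in
    P <= d%:R / n%:R + err /\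
    ((forall p, p \in E1 :|: E2 -> [disjoint e & p]) ->
       `|P - d%:R / n%:R| <= err).

From HB Require Import structures.
From mathcomp Require Import all_boot all_order all_algebra.
From mathcomp Require Import all_classical all_reals all_analysis.
From mathcomp Require Import ring lra zify.
Set Implicit Arguments. Unset Strict Implicit. Unset Printing Implicit Defensive.
Import Order.TTheory GRing.Theory Num.Theory.

(* Switching.  Let A (resp. B) be the graphs of the conditioned event that
   contain (resp. avoid) the pair e = uv.  A forward switching trades the edges
   uv, xy of a graph in A for ux, vy.  Each graph in A has at least nd - c such
   switchings landing in B, where c = O(d^2 + |E1| + d |E2| + d) accounts for the
   edges xy that are blocked by E1, E2 or by edges already present, while each
   graph in B is reached from at most d^2 choices (x, y neighbours of u, v).
   Hence |A| (nd - c) <= |B| d^2, i.e. P(e) <= d/n + O(c / n^2).  When u and v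
   lie on no pair of E1, the backward switching trading ux, vy, ab for uv, xa, yb
   gives |B| d^2 (nd - c) <= |A| (nd)^2, the matching lower bound.  Only two
   properties of the pair model are used: each vertex has n - 1 or n admissible
   partners, and the pairs created by a switching are admissible; both the
   ordinary and the bipartite model have them.  Finally c = O(|E1| + |E2| + 1)
   = O(log n), so c stays below nd / 2 for large n. *)

Lemma card_dep_pairs (T U : finType) (X : {set T}) (F : T -> {set U}) :
  #|[set t : T * U | (t.1 \in X) && (t.2 \in F t.1)]| = \sum_(x in X) #|F x|.
Proof.
rewrite -sum1_card (eq_bigl (fun t : T * U => (t.1 \in X) && (t.2 \in F t.1))).
  rewrite -(pair_big_dep (fun x => x \in X) (fun x y => y \in F x) (fun _ _ => 1)).
  by apply: eq_bigr => x _; rewrite sum1_card.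
by move=> t; rewrite inE.
Qed.

Lemma card_union_bound (T : finType) (A : {set T}) (bad : seq (pred T)) :
  #|A| <= #|[set t in A | ~~ has (fun b : pred T => b t) bad]|
          + \sum_(b <- bad) #|[set t in A | b t]|.
Proof.
elim: bad => [|b bad IH].
  by rewrite big_nil addn0; apply: subset_leq_card; apply/fintype.subsetP => t tA; rewrite inE tA.
rewrite big_cons addnA; apply: leq_trans IH _; rewrite leq_add2r.
have -> : [set t in A | ~~ has (fun b : pred T => b t) bad] =
  [set t in A | ~~ has (fun b : pred T => b t) (b :: bad)] :|:
  [set t in [set t in A | ~~ has (fun b : pred T => b t) bad] | b t].
  apply/setP => t; rewrite !inE /= negb_or.
  by case: (t \in A); case: (b t); case: has.
apply: leq_trans (leq_card_setU _ _) _; rewrite leq_add2l.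
by apply: subset_leq_card; apply/fintype.subsetP => t; rewrite !inE => /andP [/andP [-> _] ->].
Qed.

Lemma disjoint_notin (T : finType) (A B : {set T}) :
  (forall x, x \in A -> x \notin B) -> [disjoint A & B].
Proof. by move=> AB; rewrite disjoint_subset; apply/fintype.subsetP => x /AB. Qed.

Section SwitchingRatio.
Variable R : realFieldType.
Local Open Scope ring_scope.

(* a (nd - c) <= b d^2 gives a / (a + b) <= d^2 / (nd - c), and
   1 / (1 - c/(nd)) <= 1 + 2c/(nd) as long as 2c <= nd. *)
Lemma ratio_upper_bound (a b n d c : R) : 0 <= a -> 0 <= b -> 0 < a + b -> 0 < n -> 0 < d ->
  0 <= c -> 2 * c <= n * d -> a * (n * d) <= b * (d * d) + a * c ->
  a / (a + b) <= d / n + 2 * c / n ^+ 2.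
Proof.
move=> a0 b0 ab0 n0 d0 c0 small_c count.
have -> : d / n + 2 * c / n ^+ 2 = (d * n + 2 * c) / n ^+ 2 by field; rewrite gt_eqF.
have n2 : 0 < n ^+ 2 by rewrite exprn_gt0.
rewrite ler_pdivrMr // mulrAC ler_pdivlMr //.
have dd : 0 < d * d by rewrite mulr_gt0.
rewrite -(ler_pM2l dd).
have key : 0 <= (b * (d * d) - a * (n * d - c)) * (d * n + 2 * c).
  by apply: mulr_ge0; [lra | nra].
have slack : 0 <= a * c * (n * d - 2 * c) by apply: mulr_ge0; [nra | lra].
have pos : 0 <= a * (d * d) * (d * n + 2 * c) by apply: mulr_ge0; nra.
rewrite expr2; nra.
Qed.

Lemma ratio_lower_bound (a b n d c : R) : 0 <= a -> 0 <= b -> 0 < a + b -> 0 < n -> 0 < d ->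
  0 <= c -> c <= n * d ->
  b * (d * d) * (n * d) <= a * ((n * d) * (n * d)) + b * (d * d) * c ->
  d / n - (d * d + c) / n ^+ 2 <= a / (a + b).
Proof.
move=> a0 b0 ab0 n0 d0 c0 small_c count.
have dd : 0 < d * d by rewrite mulr_gt0.
have scaled : b * (n * d - c) <= a * (n * n) by rewrite -(ler_pM2l dd); nra.
have -> : d / n - (d * d + c) / n ^+ 2 = (d * n - d * d - c) / n ^+ 2 by field; rewrite gt_eqF.
have n2 : 0 < n ^+ 2 by rewrite exprn_gt0.
rewrite ler_pdivlMr // mulrAC ler_pdivrMr // expr2.
set K := d * n - d * d - c.
have [hK|hK] := lerP K 0; first by apply: le_trans (_ : 0 <= _); nra.
have hp : 0 < n * d - c by rewrite /K in hK; nra.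
rewrite -(ler_pM2l hp).
have key : 0 <= K * (a * (n * n) - b * (n * d - c)) by apply: mulr_ge0; lra.
have slack : 0 <= a * (d * d * (n * d - c)) by apply: mulr_ge0; nra.
have pos : 0 <= a * ((n * d) ^+ 2 - (n * d - c) ^+ 2) by apply: mulr_ge0; nra.
rewrite /K in key hK *; nra.
Qed.

End SwitchingRatio.

Section Graphs.
Variable V : finType.
Implicit Types (G R A : {set {set V}}) (p : {set V}).

Definition nbr G x := [set y | [set x; y] \in G].

Definition darts G := [set t : V * V | [set t.1; t.2] \in G].

Definition switch G R A := (G :\: R) :|: A.

Lemma set2C (x y : V) : [set x; y] = [set y; x].
Proof. exact: finset.setUC. Qed.

Lemma set2_inj (x : V) : injective (fun y => [set x; y]).
Proof.
move=> y y' /= E.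
have : y \in [set x; y'] by rewrite -E !inE eqxx orbT.
rewrite !inE => /orP [/eqP yx|/eqP //].
have : y' \in [set x; y] by rewrite E !inE eqxx orbT.
by rewrite !inE yx orbb => /eqP ->.
Qed.

Lemma set2_neq (a b : V) p : a \notin p -> [set a; b] != p.
Proof. by move=> ap; apply/eqP => E; move: ap; rewrite -E !inE eqxx. Qed.

Lemma set2_neq' (a b : V) p : b \notin p -> [set a; b] != p.
Proof. by rewrite set2C; apply: set2_neq. Qed.

Lemma in_set2_nat (a b w : V) : a != b -> (w \in [set a; b] : nat) = (w == a) + (w == b).
Proof.
move=> ab; rewrite !inE; case: (w =P a) => [->|]; last by case: (w == b).
by rewrite (negbTE ab).
Qed.

Lemma card_set4_le (a b c e : V) : #|[set a; b; c; e]| <= 4.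
Proof.
have -> : [set a; b; c; e] = a |: (b |: (c |: [set e])) by apply/setP => x; rewrite !inE !orbA.
by rewrite !cardsU1 cards1; case: (a \in _); case: (b \in _); case: (c \in _).
Qed.

Lemma card_nbr G x : #|nbr G x| <= deg G x.
Proof.
rewrite -(card_imset _ (@set2_inj x)); apply: subset_leq_card.
apply/fintype.subsetP => p /imsetP [y]; rewrite inE => yG ->.
by rewrite inE yG !inE eqxx.
Qed.

Lemma card_nbr_eq G x : (forall p, p \in G -> #|p| = 2) -> #|nbr G x| = deg G x.
Proof.
move=> G2; apply/eqP; rewrite eqn_leq card_nbr /=.
rewrite -(card_imset _ (@set2_inj x)); apply: subset_leq_card.
apply/fintype.subsetP => p; rewrite inE => /andP [pG xp].
have /cards2P [a [b [_ pE]]] : #|p| == 2 by rewrite G2.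
move: xp; rewrite pE !inE => /orP [/eqP ->|/eqP ->]; apply/imsetP.
  by exists b; rewrite ?inE -pE.
by exists a; rewrite ?inE -?pE // set2C -pE.
Qed.

Lemma deg_sum G w : deg G w = \sum_(p in G) (w \in p : nat).
Proof.
rewrite /deg -sum1_card big_mkcond [RHS]big_mkcond /=.
by apply: eq_bigr => p _; rewrite !inE; case: (p \in G); case: (w \in p).
Qed.

Lemma handshake G : (forall p, p \in G -> #|p| = 2) -> \sum_x deg G x = #|G| * 2.
Proof.
move=> G2; under eq_bigr => x _ do rewrite deg_sum.
rewrite exchange_big /= -sum_nat_const; apply: eq_bigr => p pG.
by rewrite -(G2 p pG) -sum1_card [RHS]big_mkcond; apply: eq_bigr => x _; case: (x \in p).
Qed.

Lemma card_nbr_le G x : #|nbr G x| <= #|G|.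
Proof.
apply: leq_trans (card_nbr G x) _; apply: subset_leq_card.
by apply/fintype.subsetP => p; rewrite inE => /andP [].
Qed.

Lemma card_darts_fst G (X : {set V}) :
  #|[set t in darts G | t.1 \in X]| = \sum_(x in X) #|nbr G x|.
Proof.
by rewrite -card_dep_pairs; apply: eq_card => -[x y]; rewrite !inE andbC.
Qed.

Lemma card_darts_snd G (X : {set V}) :
  #|[set t in darts G | t.2 \in X]| = #|[set t in darts G | t.1 \in X]|.
Proof.
have swap_inj : injective (fun t : V * V => (t.2, t.1)) by move=> [a b] [c e] [-> ->].
rewrite -(card_imset _ swap_inj); apply: eq_card => -[x y]; rewrite !inE /=.
apply/imsetP/idP => [[[a b]] | H]; last by exists (y, x); rewrite // !inE set2C.
by rewrite !inE /= => /andP [abG bX] [-> ->]; rewrite set2C abG.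
Qed.

Lemma card_darts G : (forall p, p \in G -> #|p| = 2) -> #|darts G| <= 2 * #|G|.
Proof.
move=> G2; rewrite mulnC -handshake //.
have -> : darts G = [set t in darts G | t.1 \in [set: V]].
  by apply/setP => t; rewrite !inE andbT.
rewrite card_darts_fst; under eq_bigl => x do rewrite inE.
by apply: leq_sum => x _; apply: card_nbr.
Qed.



Lemma deg_set2 p q w : p != q -> deg [set p; q] w = (w \in p) + (w \in q).
Proof. by move=> pq; rewrite deg_sum big_setU1 ?big_set1 // inE. Qed.

Lemma deg_set3 p q r w : p != q -> p != r -> q != r ->
  deg [set p; q; r] w = (w \in p) + (w \in q) + (w \in r).
Proof.
move=> pq pr qr; rewrite deg_sum.
have -> : [set p; q; r] = p |: [set q; r] by apply/setP => s; rewrite !inE orbA.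
rewrite big_setU1 ?big_setU1 ?big_set1 /= ?addnA // ?inE //.
by rewrite negb_or pq pr.
Qed.

Lemma deg_switch2 (u v x y w : V) : u != v -> x != y -> u != x -> v != y ->
  x \notin [set u; v] -> y \notin [set u; v] ->
  deg [set [set u; v]; [set x; y]] w = deg [set [set u; x]; [set v; y]] w.
Proof.
move=> uv xy ux vy xuv yuv; rewrite !inE negb_or in yuv; case/andP: yuv => yu _.
rewrite !deg_set2 ?in_set2_nat //.
- by rewrite addnACA.
- by rewrite set2_neq // !inE negb_or uv eq_sym.
- by rewrite eq_sym set2_neq.
Qed.

(* [x = y] is allowed: a common neighbour of [u] and [v] may be used. *)
Lemma deg_switch3 (u v x y a b w : V) : u != v -> u != x -> v != y -> y != u -> a != b ->
  a \notin [set u; v; x; y] -> b \notin [set u; v; x; y] ->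
  deg [set [set u; x]; [set v; y]; [set a; b]] w =
  deg [set [set u; v]; [set x; a]; [set y; b]] w.
Proof.
move=> uv ux vy yu ab aW bW; rewrite !inE !negb_or -!andbA in aW bW.
case/and4P: aW => au av ax ay; case/and4P: bW => bu bv bx by_.
rewrite !deg_set3 ?in_set2_nat //.
- by move: (w == u) (w == v) (w == x) (w == y) (w == a) (w == b) => [] [] [] [] [] [].
- by rewrite eq_sym.
- by rewrite eq_sym.
- by rewrite set2_neq // !inE negb_or ux eq_sym.
- by rewrite set2_neq // !inE negb_or !(eq_sym u) yu.
- by rewrite set2_neq' // !inE negb_or ay.
- by rewrite set2_neq // !inE negb_or uv eq_sym.
- by rewrite set2_neq // !inE negb_or !(eq_sym u) au.
- by rewrite set2_neq // !inE negb_or !(eq_sym v) av.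
Qed.

Lemma mem_switchl G R A p : p \in A -> p \in switch G R A.
Proof. by move=> pA; rewrite !inE pA orbT. Qed.

Lemma mem_switchr G R A p : p \in R -> p \notin A -> p \notin switch G R A.
Proof. by move=> pR pA; rewrite !inE pR (negbTE pA). Qed.

Lemma deg_switch G R A w : R \subset G -> [disjoint A & G] ->
  deg (switch G R A) w + deg R w = deg G w + deg A w.
Proof.
move=> RG AG; rewrite !deg_sum (big_setID A) [in RHS](big_setID R) /=.
have -> : switch G R A :&: A = A by apply/finset.setIidPr/finset.subsetUr.
have -> : G :&: R = R by apply/finset.setIidPr.
have -> : switch G R A :\: A = G :\: R.
  apply/setP => p; rewrite !inE; case pA: (p \in A) => /=; last by rewrite orbF.
  by rewrite (disjointFr AG pA) andbF.
by rewrite /=; lia.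
Qed.

Lemma switchK G R A : R \subset G -> [disjoint A & G] -> (switch G R A :\: A) :|: R = G.
Proof.
move=> RG AG; apply/setP => p; rewrite !inE.
case pR: (p \in R); first by rewrite orbT (fintype.subsetP RG p pR).
case pA: (p \in A) => /=; last by rewrite ?orbF ?andbT.
by rewrite (disjointFr AG pA).
Qed.

Lemma switch_double_count (I : finType) (X Y : {set {set {set V}}})
    (S Q : {set {set V}} -> {set I}) (R A : I -> {set {set V}}) :
  (forall G t, G \in X -> t \in S G ->
    [/\ R t \subset G, [disjoint A t & G], switch G (R t) (A t) \in Y
      & t \in Q (switch G (R t) (A t))]) ->
  \sum_(G in X) #|S G| <= \sum_(H in Y) #|Q H|.
Proof.
move=> switch_ok; rewrite -!card_dep_pairs.
pose f (g : {set {set V}} * I) := (switch g.1 (R g.2) (A g.2), g.2).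
have f_inj : {in [set g | (g.1 \in X) && (g.2 \in S g.1)] &, injective f}.
  move=> [G1 t] [G2 t']; rewrite !inE /= => /andP [G1X t1] /andP [G2X t2] [E tt'].
  subst t'; case: (switch_ok _ _ G1X t1) => RG1 AG1 _ _.
  case: (switch_ok _ _ G2X t2) => RG2 AG2 _ _.
  by rewrite -(switchK RG1 AG1) -(switchK RG2 AG2) E.
rewrite -(card_in_imset f_inj); apply: subset_leq_card.
apply/fintype.subsetP => g /imsetP [[G t]]; rewrite inE /= => /andP [GX tS] ->.
by case: (switch_ok _ _ GX tS) => _ _ HY tQ; rewrite inE /= HY tQ.
Qed.

End Graphs.

Section RegularGraphs.
Variables (V : finType) (ok : pred {set V}) (n d : nat).
Hypothesis ok_card2 : forall p, ok p -> #|p| = 2.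
Hypothesis card_partners : forall u, n.-1 <= #|[set x | ok [set u; x]]| <= n.
Hypothesis ok_square : forall p q r s : V,
  ok [set p; q] -> ok [set p; r] -> ok [set q; s] -> r != s -> ok [set r; s].

Local Notation Reg := (reg_graphs ok d).
Implicit Types (G : {set {set V}}) (X W : {set V}).

Lemma reg_graphsP G :
  reflect ((forall p, p \in G -> ok p) /\ (forall w, deg G w = d)) (G \in Reg).
Proof.
rewrite inE; apply: (iffP andP) => [[/forallP okG /forallP degG]|[okG degG]].
  by split=> [p pG|w]; [move: (okG p); rewrite pG | apply/eqP].
by split; apply/forallP => x; [apply/implyP => /okG | rewrite degG].
Qed.

Lemma ok_neq (a b : V) : ok [set a; b] -> a != b.
Proof. by move/ok_card2; rewrite cards2; case: (a != b). Qed.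

Lemma card_nbr_reg G x : G \in Reg -> #|nbr G x| = d.
Proof. by case/reg_graphsP => okG degG; rewrite card_nbr_eq ?degG // => p /okG /ok_card2. Qed.

Lemma ok_nbr G a b : G \in Reg -> b \in nbr G a -> ok [set a; b].
Proof. by case/reg_graphsP => okG _; rewrite inE => /okG. Qed.

Lemma card_darts_reg_fst G X : G \in Reg -> #|[set t in darts G | t.1 \in X]| = #|X| * d.
Proof.
by move=> GR; rewrite card_darts_fst -sum_nat_const; apply: eq_bigr => x _; apply: card_nbr_reg.
Qed.

Definition arcs G (a b : V) := [set t in darts G | ok [set a; t.1] && ok [set b; t.2]].

Lemma mem_arcs G a b x y :
  ((x, y) \in arcs G a b) = [&& [set x; y] \in G, ok [set a; x] & ok [set b; y]].
Proof. by rewrite !inE. Qed.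

Lemma card_arcs_fst_le G a b X : G \in Reg -> #|[set t in arcs G a b | t.1 \in X]| <= #|X| * d.
Proof.
move=> GR; rewrite -(card_darts_reg_fst X GR); apply: subset_leq_card.
by apply/fintype.subsetP => t; rewrite !inE => /andP [/andP [-> _] ->].
Qed.

Lemma card_arcs_snd_le G a b X : G \in Reg -> #|[set t in arcs G a b | t.2 \in X]| <= #|X| * d.
Proof.
move=> GR; rewrite -(card_darts_reg_fst X GR) -card_darts_snd; apply: subset_leq_card.
by apply/fintype.subsetP => t; rewrite !inE => /andP [/andP [-> _] ->].
Qed.

Lemma card_arcs_le G a b : G \in Reg -> #|arcs G a b| <= n * d.
Proof.
move=> GR; apply: leq_trans (_ : #|[set t in darts G | t.1 \in [set x | ok [set a; x]]]| <= _).
  by apply: subset_leq_card; apply/fintype.subsetP => t; rewrite !inE => /andP [-> /andP [-> _]].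
by rewrite card_darts_reg_fst // leq_mul2r; case/andP: (card_partners a) => _ ->; rewrite orbT.
Qed.

Lemma card_arcs_ge G a b : G \in Reg -> ok [set a; b] -> n * d <= #|arcs G a b| + 2 * d.
Proof.
move=> GR ab.
have cover : [set t in darts G | t.1 \in [set x | ok [set a; x]]] \subset
    arcs G a b :|: [set t in darts G | t.2 \in [set b]].
  (* such an arc xy violates ok [set b; y] only if y = b, by ok_square *)
  apply/fintype.subsetP => -[x y]; rewrite !inE /= => /andP [xyG ax].
  rewrite xyG ax /=; case: (y =P b) => [_|/eqP yb]; rewrite ?orbT // orbF.
  rewrite set2C; apply: (@ok_square x a) => //; first by rewrite set2C.
  by apply: ok_nbr GR _; rewrite inE.
have := leq_trans (subset_leq_card cover) (leq_card_setU _ _).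
rewrite card_darts_snd !card_darts_reg_fst // cards1.
by case/andP: (card_partners a) => ge_n _; nia.
Qed.

Section Conditioned.
Variables E1 E2 : {set {set V}}.
Hypothesis E1_ok : forall p, p \in E1 -> ok p.

Local Notation Om := (Reg :&: ev_in_out E1 E2).

Lemma switch_conditioned G (R A : {set {set V}}) : G \in Om -> R \subset G -> [disjoint A & G] ->
  (forall p, p \in A -> ok p) -> (forall w, deg R w = deg A w) ->
  (forall p, p \in R -> p \notin E1) -> (forall p, p \in A -> p \notin E2) ->
  switch G R A \in Om.
Proof.
case/finset.setIP => /reg_graphsP [okG degG]; rewrite inE => /andP [E1G E2G].
move=> RG AG okA degRA RE1 AE2; apply/finset.setIP; split.
  apply/reg_graphsP; split => [p|w]; first by rewrite !inE => /orP [/andP [_ /okG]|/okA].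
  by apply/eqP; rewrite -(eqn_add2r (deg R w)) deg_switch // degG degRA.
rewrite inE; apply/andP; split.
  apply/fintype.subsetP => p pE1; rewrite !inE (fintype.subsetP E1G p pE1) andbT.
  by case pR: (p \in R) => //=; move: (RE1 p pR); rewrite pE1.
apply/pred0P => p /=; rewrite !inE; case pE2: (p \in E2) => //=.
rewrite (disjointFr E2G pE2) andbF /=.
by apply/negP => pA; move: (AE2 p pA); rewrite pE2.
Qed.

(* 2d from card_arcs_ge, 8d from |W| <= 4, 2d^2 from the neighbours of p and q,
   2|E1| and 2d|E2| from the constraints imposed by E1 and E2. *)
Definition switch_cost := 10 * d + 2 * (d * d) + 2 * #|E1| + 2 * (#|E2| * d).

Definition switch_obstacles G (p q : V) W : seq (pred (V * V)) :=
  [:: fun t => t.1 \in W; fun t => t.2 \in W; fun t => t.1 \in nbr G p;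
      fun t => t.2 \in nbr G q; fun t => t.2 \in nbr E1 t.1;
      fun t => t.1 \in nbr E2 p; fun t => t.2 \in nbr E2 q].

(* Arcs (x, y) of G that may be traded for the new pairs px and qy.  Admissibility
   is tested against a and b; in the backward switching ok_square transfers it to
   px and qy. *)
Definition switchable G (p q a b : V) W :=
  [set t in arcs G a b | ~~ has (fun o : pred (V * V) => o t) (switch_obstacles G p q W)].

Lemma mem_switchable G p q a b W x y : ((x, y) \in switchable G p q a b W) =
  [&& [set x; y] \in G, ok [set a; x], ok [set b; y], x \notin W, y \notin W,
      x \notin nbr G p, y \notin nbr G q, [set x; y] \notin E1,
      [set p; x] \notin E2 & [set q; y] \notin E2].
Proof. by rewrite !inE /= !negb_or !inE andbT -!andbA. Qed.

Lemma card_switchable G p q a b W : G \in Reg -> ok [set a; b] -> #|W| <= 4 ->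
  n * d <= #|switchable G p q a b W| + switch_cost.
Proof.
move=> GR ab W4; have := card_union_bound (arcs G a b) (switch_obstacles G p q W).
rewrite -/(switchable G p q a b W) !big_cons big_nil /= addn0 => cover.
have fst_W := card_arcs_fst_le a b W GR; have snd_W := card_arcs_snd_le a b W GR.
have fst_p := card_arcs_fst_le a b (nbr G p) GR.
have snd_q := card_arcs_snd_le a b (nbr G q) GR.
rewrite !(card_nbr_reg _ GR) in fst_p snd_q.
have in_E1 : #|[set t in arcs G a b | t.2 \in nbr E1 t.1]| <= 2 * #|E1|.
  apply: leq_trans (card_darts (fun p pE1 => ok_card2 (E1_ok pE1))).
  by apply: subset_leq_card; apply/fintype.subsetP => t; rewrite !inE => /andP [_ ->].
have fst_E2 := card_arcs_fst_le a b (nbr E2 p) GR.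
have snd_E2 := card_arcs_snd_le a b (nbr E2 q) GR.
have := leq_trans cover (leq_add (leqnn _) (leq_add fst_W (leq_add snd_W (leq_add fst_p
  (leq_add snd_q (leq_add in_E1 (leq_add fst_E2 snd_E2))))))).
have Wd : #|W| * d <= 4 * d by rewrite leq_mul2r W4 orbT.
have E2p : #|nbr E2 p| * d <= #|E2| * d by rewrite leq_mul2r card_nbr_le orbT.
have E2q : #|nbr E2 q| * d <= #|E2| * d by rewrite leq_mul2r card_nbr_le orbT.
have := card_arcs_ge GR ab; rewrite /switch_cost.
by set A := #|arcs G a b|; lia.
Qed.

Section Edge.
Variables u v : V.
Hypothesis ok_uv : ok [set u; v].
Hypothesis uv_notin_E1 : [set u; v] \notin E1.
Hypothesis uv_notin_E2 : [set u; v] \notin E2.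

Local Notation e := [set u; v].

Definition with_edge := Om :&: ev_edge e.
Definition without_edge := Om :\: ev_edge e.

Lemma with_edge_reg G : G \in with_edge -> G \in Reg.
Proof. by case/finset.setIP => /finset.setIP []. Qed.

Lemma without_edge_reg G : G \in without_edge -> G \in Reg.
Proof. by case/finset.setDP => /finset.setIP []. Qed.

Definition nbr_pairs G := [set t : V * V | (t.1 \in nbr G u) && (t.2 \in nbr G v)].

Lemma card_nbr_pairs G : G \in Reg -> #|nbr_pairs G| = d * d.
Proof.
move=> GR; rewrite (card_dep_pairs _ (fun=> nbr G v)) (eq_bigr (fun=> d)).
  by rewrite sum_nat_const card_nbr_reg.
by move=> x _; apply: card_nbr_reg.
Qed.

Definition fwd_removed (t : V * V) := [set e; [set t.1; t.2]].
Definition fwd_added (t : V * V) := [set [set u; t.1]; [set v; t.2]].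

Lemma forward_switching G t : G \in with_edge -> t \in switchable G u v u v e ->
  let H := switch G (fwd_removed t) (fwd_added t) in
  [/\ fwd_removed t \subset G, [disjoint fwd_added t & G],
      H \in without_edge & t \in nbr_pairs H].
Proof.
case: t => x y /finset.setIP [GO eG]; rewrite inE in eG.
rewrite mem_switchable => /and5P [xyG okux okvy xe /and5P [ye xnu ynv xyE1 /andP [uxE2 vyE2]]].
rewrite !inE in xnu ynv.
have /reg_graphsP [okG _] : G \in Reg by case/finset.setIP: GO.
have uv := ok_neq ok_uv; have xy := ok_neq (okG _ xyG).
have ux := ok_neq okux; have vy := ok_neq okvy.
have xv : x != v by apply: contraNneq xe => ->; rewrite !inE eqxx orbT.
have yu : y != u by apply: contraNneq ye => ->; rewrite !inE eqxx.
have RG : fwd_removed (x, y) \subset G.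
  by apply/fintype.subsetP => p; rewrite !inE => /orP [] /eqP ->.
have AG : [disjoint fwd_added (x, y) & G].
  by apply: disjoint_notin => p; rewrite !inE => /orP [] /eqP ->.
move=> H; split=> //.
  apply/finset.setDP; split.
    apply: switch_conditioned GO RG AG _ _ _ _ => [p|w|p|p].
    - by rewrite !inE => /orP [] /eqP ->.
    - exact: deg_switch2.
    - by rewrite !inE => /orP [] /eqP ->.
    - by rewrite !inE => /orP [] /eqP ->.
  rewrite inE; apply: mem_switchr; first by rewrite !inE eqxx.
  have eux : e != [set u; x] by rewrite set2_neq' // !inE negb_or eq_sym uv eq_sym xv.
  have evy : e != [set v; y] by rewrite set2_neq // !inE negb_or uv eq_sym yu.
  by rewrite !inE negb_or eux evy.
rewrite inE /=; apply/andP; split; rewrite inE; apply: mem_switchl.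
all: by rewrite !inE eqxx ?orbT.
Qed.

Lemma count_forward :
  #|with_edge| * (n * d) <= #|without_edge| * (d * d) + #|with_edge| * switch_cost.
Proof.
have := @switch_double_count _ _ with_edge without_edge (fun G => switchable G u v u v e)
  nbr_pairs fwd_removed fwd_added (@forward_switching).
rewrite [\sum_(H in without_edge) _](eq_bigr (fun=> d * d)); last first.
  by move=> H /without_edge_reg /card_nbr_pairs.
rewrite sum_nat_const => le_count.
have : \sum_(G in with_edge) (n * d) <=
       \sum_(G in with_edge) (#|switchable G u v u v e| + switch_cost).
  apply: leq_sum => G /with_edge_reg GR.
  by apply: card_switchable; rewrite // cards2; case: (_ != _).
by rewrite big_split /= !sum_nat_const => /leq_trans; apply; rewrite leq_add2r.
Qed.

Section EdgeAwayFromE1.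
Hypothesis u_notin_E1 : forall p, p \in E1 -> u \notin p.
Hypothesis v_notin_E1 : forall p, p \in E1 -> v \notin p.

Definition bwd_removed (t : (V * V) * (V * V)) :=
  [set [set u; t.1.1]; [set v; t.1.2]; [set t.2.1; t.2.2]].
Definition bwd_added (t : (V * V) * (V * V)) :=
  [set e; [set t.1.1; t.2.1]; [set t.1.2; t.2.2]].

Definition bwd_switchings G := [set t : (V * V) * (V * V) |
  (t.1 \in nbr_pairs G) && (t.2 \in switchable G t.1.1 t.1.2 v u [set u; v; t.1.1; t.1.2])].

Definition bwd_targets G := [set t : (V * V) * (V * V) |
  ((t.1.1, t.2.1) \in arcs G u v) && ((t.1.2, t.2.2) \in arcs G v u)].

Lemma card_bwd_targets G : G \in Reg -> #|bwd_targets G| <= (n * d) * (n * d).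
Proof.
move=> GR; pose r (t : (V * V) * (V * V)) := ((t.1.1, t.2.1), (t.1.2, t.2.2)).
have r_inj : injective r by move=> [[? ?] [? ?]] [[? ?] [? ?]] [-> -> -> ->].
rewrite -(card_imset _ r_inj).
apply: leq_trans (_ : #|finset.setX (arcs G u v) (arcs G v u)| <= _).
  apply: subset_leq_card; apply/fintype.subsetP => s /imsetP [t].
  by rewrite inE => /andP [t1 t2] ->; rewrite finset.in_setX t1 t2.
by rewrite finset.cardsX leq_mul // card_arcs_le.
Qed.

Lemma backward_switching G t : G \in without_edge -> t \in bwd_switchings G ->
  let H := switch G (bwd_removed t) (bwd_added t) in
  [/\ bwd_removed t \subset G, [disjoint bwd_added t & G],
      H \in with_edge & t \in bwd_targets H].
Proof.
case: t => -[x y] [a b] /finset.setDP [GO eG] xyab H; rewrite inE in eG.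
rewrite inE /= in xyab; case/andP: xyab => xy_nbr ab_sw.
rewrite !inE /= in xy_nbr; case/andP: xy_nbr => uxG vyG.
rewrite mem_switchable in ab_sw.
case/and5P: ab_sw => abG okva okub aW /and5P [bW anx bny abE1 /andP [xaE2 ybE2]].
rewrite !inE in anx bny.
have /reg_graphsP [okG _] : G \in Reg by case/finset.setIP: GO.
have okux := okG _ uxG; have okvy := okG _ vyG.
have uv := ok_neq ok_uv; have ux := ok_neq okux; have vy := ok_neq okvy.
have ab := ok_neq (okG _ abG).
have yu : y != u by apply: contraNneq eG => yu; rewrite set2C -yu.
have xa : x != a by apply: contraNneq aW => <-; rewrite !inE eqxx !orbT.
have yb : y != b by apply: contraNneq bW => <-; rewrite !inE eqxx !orbT.
have okxa : ok [set x; a] by apply: ok_square ok_uv okux okva xa.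
have okyb : ok [set y; b] by apply: (@ok_square v u) => //; rewrite set2C.
have RG : bwd_removed ((x, y), (a, b)) \subset G.
  by apply/fintype.subsetP => p; rewrite !inE -orbA => /or3P [] /eqP ->.
have AG : [disjoint bwd_added ((x, y), (a, b)) & G].
  by apply: disjoint_notin => p; rewrite !inE -orbA => /or3P [] /eqP ->.
have uxE1 : [set u; x] \notin E1 by apply/negP => /u_notin_E1; rewrite !inE eqxx.
have vyE1 : [set v; y] \notin E1 by apply/negP => /v_notin_E1; rewrite !inE eqxx.
have xaH : [set x; a] \in H by apply: mem_switchl; rewrite !inE eqxx orbT.
have ybH : [set y; b] \in H by apply: mem_switchl; rewrite !inE eqxx !orbT.
split=> //.
  apply/finset.setIP; split; last by rewrite inE; apply: mem_switchl; rewrite !inE eqxx.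
  have degRA w := deg_switch3 w uv ux vy yu ab aW bW.
  by apply: switch_conditioned GO RG AG _ degRA _ _ => p; rewrite !inE -orbA => /or3P [] /eqP ->.
by rewrite inE /= !mem_arcs xaH ybH okux okva okvy okub.
Qed.

Lemma card_bwd_switchings G : G \in Reg ->
  (d * d) * (n * d) <= #|bwd_switchings G| + (d * d) * switch_cost.
Proof.
move=> GR; rewrite /bwd_switchings (card_dep_pairs _
  (fun xy : V * V => switchable G xy.1 xy.2 v u [set u; v; xy.1; xy.2])).
rewrite -(card_nbr_pairs GR) -!sum_nat_const -big_split /=.
apply: leq_sum => -[x y] _; apply: card_switchable => //; first by rewrite set2C.
exact: card_set4_le.
Qed.

Lemma count_backward : #|without_edge| * (d * d) * (n * d) <=
  #|with_edge| * ((n * d) * (n * d)) + #|without_edge| * (d * d) * switch_cost.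
Proof.
have le_count := @switch_double_count _ _ without_edge with_edge bwd_switchings
  bwd_targets bwd_removed bwd_added (@backward_switching).
have le_targets : \sum_(H in with_edge) #|bwd_targets H| <= #|with_edge| * ((n * d) * (n * d)).
  by rewrite -sum_nat_const; apply: leq_sum => H /with_edge_reg /card_bwd_targets.
have : \sum_(G in without_edge) ((d * d) * (n * d)) <=
       \sum_(G in without_edge) (#|bwd_switchings G| + (d * d) * switch_cost).
  by apply: leq_sum => G /without_edge_reg /card_bwd_switchings.
rewrite big_split /= !sum_nat_const -!mulnA => /leq_trans; apply.
by rewrite leq_add2r -!mulnA in le_targets *; apply: leq_trans le_count le_targets.
Qed.

End EdgeAwayFromE1.

Section EdgeProbability.
Variable R : realFieldType.
Local Open Scope ring_scope.

Local Notation P := (cond_prob R Reg (ev_edge e) (ev_in_out E1 E2)).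

Lemma cond_prob_edgeE : P = #|with_edge|%:R / (#|with_edge| + #|without_edge|)%:R.
Proof. by rewrite /cond_prob finset.setIAC -(finset.cardsID (ev_edge e) Om). Qed.

Hypotheses (d_gt0 : (0 < d)%N) (n_gt0 : (0 < n)%N) (Om_gt0 : (0 < #|Om|)%N).

Lemma edge_counts_gt0 :
  [/\ (0 : R) < n%:R, (0 : R) < d%:R & (0 : R) < #|with_edge|%:R + #|without_edge|%:R].
Proof. by rewrite -natrD !ltr0n finset.cardsID. Qed.

Lemma cond_prob_edge_le : (2 * switch_cost <= n * d)%N ->
  P <= d%:R / n%:R + 2 * switch_cost%:R / n%:R ^+ 2.
Proof.
move=> cost_small; have [n0 d0 Om0] := edge_counts_gt0.
rewrite cond_prob_edgeE natrD; apply: ratio_upper_bound => //.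
- by rewrite -natrM -natrM ler_nat.
- by have := count_forward; rewrite -(ler_nat R) !(natrD, natrM).
Qed.

Lemma cond_prob_edge_ge : (forall p, p \in E1 -> u \notin p) ->
  (forall p, p \in E1 -> v \notin p) -> (switch_cost <= n * d)%N ->
  d%:R / n%:R - ((d * d)%:R + switch_cost%:R) / n%:R ^+ 2 <= P.
Proof.
move=> uE1 vE1 cost_small; have [n0 d0 Om0] := edge_counts_gt0.
rewrite cond_prob_edgeE natrD natrM; apply: ratio_lower_bound => //.
- by rewrite -natrM ler_nat.
- by have := count_backward uE1 vE1; rewrite -(ler_nat R) !(natrD, natrM).
Qed.

End EdgeProbability.

End Edge.

End Conditioned.

End RegularGraphs.

Section SimplePairs.
Variable n : nat.
Implicit Types (p : {set 'I_n}) (u : 'I_n).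

Lemma simple_pair_card2 p : simple_pair p -> #|p| = 2.
Proof. by move/eqP. Qed.

Lemma card_simple_partners u : n.-1 <= #|[set x | simple_pair [set u; x]]| <= n.
Proof.
have -> : [set x | simple_pair [set u; x]] = [set~ u].
  by apply/setP => x; rewrite !inE /simple_pair cards2 (eq_sym u); case: (x != u).
by rewrite cardsC1 card_ord leqnn leq_pred.
Qed.

Lemma simple_pair_square (p q r s : 'I_n) : simple_pair [set p; q] -> simple_pair [set p; r] ->
  simple_pair [set q; s] -> r != s -> simple_pair [set r; s].
Proof. by move=> _ _ _ rs; rewrite /simple_pair cards2 rs. Qed.

End SimplePairs.

Section BipartitePairs.
Variable n : nat.
Implicit Types (p : {set 'I_n + 'I_n}) (x y : 'I_n + 'I_n).

Definition side x : bool := if x is inl _ then true else false.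

Lemma bip_pairE x y : bip_pair [set x; y] = (side x != side y).
Proof.
apply/idP/idP => [/existsP [a /existsP [b /eqP xyE]]|].
  have : x \in [set inl a; inr b] by rewrite -xyE !inE eqxx.
  have : y \in [set inl a; inr b] by rewrite -xyE !inE eqxx orbT.
  have : inl a \in [set x; y] by rewrite xyE !inE eqxx.
  have : inr b \in [set x; y] by rewrite xyE !inE eqxx orbT.
  by rewrite !inE; case: x {xyE} => ?; case: y => ?.
case: x => a; case: y => b //= _; apply/existsP.
  by exists a; apply/existsP; exists b.
by exists b; apply/existsP; exists a; rewrite set2C.
Qed.

Lemma bip_pair_card2 p : bip_pair p -> #|p| = 2.
Proof. by case/existsP => a /existsP [b /eqP ->]; rewrite cards2. Qed.

Lemma card_bip_partners x : n.-1 <= #|[set y | bip_pair [set x; y]]| <= n.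
Proof.
suff -> : #|[set y | bip_pair [set x; y]]| = n by rewrite leq_pred leqnn.
have other_side : [set y | bip_pair [set x; y]] =
    [set (if side x then inr a else inl a) | a in 'I_n].
  apply/setP => y; rewrite inE bip_pairE.
  by case: x => a; case: y => b /=; apply/esym/imsetP; [case | exists b | exists b | case].
by rewrite other_side card_imset ?card_ord //; case: (side x) => a b [].
Qed.

Lemma bip_pair_square (p q r s : 'I_n + 'I_n) : bip_pair [set p; q] -> bip_pair [set p; r] ->
  bip_pair [set q; s] -> r != s -> bip_pair [set r; s].
Proof.
rewrite !bip_pairE => pq pr qs _.
by move: pq pr qs; case: (side p); case: (side q); case: (side r); case: (side s).
Qed.

End BipartitePairs.

Definition switch_cost_rate (d : nat) := 2 * (d * d) + 12 * d + 2.

Lemma switch_cost_le (V : finType) d (E1 E2 : {set {set V}}) :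
  switch_cost d E1 E2 <= switch_cost_rate d * (#|E1| + #|E2| + 1).
Proof. rewrite /switch_cost /switch_cost_rate; nia. Qed.

Local Open Scope ring_scope.

Lemma ln_le_eventually (R : realType) (a b : R) : 0 < a ->
  exists N : nat, forall n : nat, (N <= n)%N -> a * ln (n%:R : R) + b <= n%:R.
Proof.
move=> a0; pose k := 2 * a; have k0 : 0 < k by rewrite mulr_gt0.
exists (Num.truncn (2 * (a * ln k + b))).+1 => n Nn.
have nN : 2 * (a * ln k + b) < n%:R.
  by apply: lt_le_trans (truncnS_gt _) _; rewrite ler_nat.
have n0 : (0 : R) < n%:R by rewrite ltr0n (leq_trans _ Nn).
have nk : 0 < n%:R / k by rewrite divr_gt0.
have ln_n : ln (n%:R : R) <= ln k + (n%:R / k - 1).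
  have nE : (n%:R : R) = k * (n%:R / k) by field; rewrite gt_eqF.
  rewrite [in ln _]nE lnM ?posrE // lerD2l.
  by have := @le_ln1Dx R (n%:R / k - 1); rewrite [1 + _]addrC subrK; apply; lra.
have : a * ln (n%:R : R) <= a * ln k + n%:R / 2 - a.
  have -> : a * ln k + n%:R / 2 - a = a * (ln k + (n%:R / k - 1)).
    by rewrite /k; field; rewrite gt_eqF.
  by rewrite ler_pM2l.
lra.
Qed.

Lemma ler_pdiv_sqr (R : realFieldType) (x y m : nat) :
  (x <= y)%N -> x%:R / m%:R ^+ 2 <= y%:R / m%:R ^+ 2 :> R.
Proof. by move=> xy; rewrite ler_wpM2r ?invr_ge0 ?exprn_ge0 // ler_nat. Qed.

Lemma switching_edge_cond_bounds (R : realType) (V : finType) (ok : pred {set V})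
    (n d : nat) (C : R) :
  (forall p, ok p -> #|p| = 2) ->
  (forall u, n.-1 <= #|[set x | ok [set u; x]]| <= n)%N ->
  (forall p q r s : V, ok [set p; q] -> ok [set p; r] -> ok [set q; s] ->
     r != s -> ok [set r; s]) ->
  (0 < d)%N -> (0 < n)%N ->
  2 * (switch_cost_rate d)%:R * (2 * C * ln (n%:R : R) + 1) <= n%:R ->
  edge_cond_bounds ok d n C (2 * switch_cost_rate d + d * d)%N%:R.
Proof.
move=> ok2 partners square d0 n0 n_large E1 E2 e E1ok _ eok _ E1C E2C Om0 eE.
have /cards2P [u [v [_ e_uv]]] : #|e| == 2%N by rewrite ok2.
subst e.
rewrite finset.in_setU negb_or in eE; case/andP: eE => eE1 eE2.
set c := switch_cost d E1 E2; set eps := (#|E1| + #|E2| + 1)%N; set k := switch_cost_rate d.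
have c_le : (c <= k * eps)%N := switch_cost_le d E1 E2.
have eps_le : (eps%:R : R) <= 2 * C * ln n%:R + 1 by rewrite /eps !natrD; lra.
have two_c : (2 * c <= n * d)%N.
  have : ((2 * k * eps)%N%:R : R) <= n%:R.
    by rewrite !natrM; apply: le_trans n_large; rewrite ler_wpM2l // mulr_ge0.
  by rewrite ler_nat; nia.
rewrite /= mulrA -natrM.
have err_up : (2 * c)%:R / n%:R ^+ 2 <= ((2 * k + d * d) * eps)%:R / n%:R ^+ 2 :> R.
  by apply: ler_pdiv_sqr; nia.
have err_lo : (d * d + c)%:R / n%:R ^+ 2 <= ((2 * k + d * d) * eps)%:R / n%:R ^+ 2 :> R.
  by apply: ler_pdiv_sqr; nia.
have up := cond_prob_edge_le ok2 partners square E1ok eok eE1 R d0 n0 Om0 two_c.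
rewrite natrM in err_up; split; first lra.
move=> e_disj; have e_away w : w \in [set u; v] -> forall p, p \in E1 -> w \notin p.
  by move=> we p pE1; rewrite (disjointFr (e_disj p _) we) // finset.in_setU pE1.
have lo := cond_prob_edge_ge ok2 partners square E1ok eok eE2 R d0 n0 Om0
  (e_away u (set21 u v)) (e_away v (set22 u v))
  (leq_trans (leq_pmull c (isT : 0 < 2)%N) two_c).
by rewrite -natrD in lo; rewrite ler_norml; apply/andP; split; lra.
Qed.

Theorem lemma6p8 (R : realType) (d : nat) (C : R) :
  (0 < d)%N -> 0 < C ->
  exists (K : R) (N : nat), forall n : nat, (N <= n)%N ->
    edge_cond_bounds (@simple_pair 'I_n) d n C K /\
    edge_cond_bounds (@bip_pair n) d n C K.
Proof.
move=> d0 C0; pose k : R := (switch_cost_rate d)%:R.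
have k0 : 0 < k by rewrite ltr0n /switch_cost_rate addn2.
have kC : 0 < 4 * k * C by rewrite !mulr_gt0.
have [N large] := ln_le_eventually (2 * k) kC.
exists (2 * switch_cost_rate d + d * d)%N%:R, N.+1 => n Nn.
have n0 : (0 < n)%N by apply: leq_trans Nn.
have n_large : 2 * k * (2 * C * ln (n%:R : R) + 1) <= n%:R.
  by have := large n (ltnW Nn); lra.
split; apply: switching_edge_cond_bounds => //.
- exact: simple_pair_card2.
- exact: card_simple_partners.
- exact: simple_pair_square.
- exact: bip_pair_card2.
- exact: card_bip_partners.
- exact: bip_pair_square.
Qed.
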